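(* Let $\alpha\ge0$ satisfy $\alpha^2+\alpha V^0-\gamma<0$, let $u_0\in C_\alpha$, and let $(s,u)$ be the solution of the free-interface problem with initial data $u_0$. Then for all $t>0$ $$|T_2(t)u_0|_\alpha\le 2\exp[(-\gamma+\alpha^2+\alpha V^0)t]\,|u_0|_\alpha .$$
   Context: Fix $\gamma>0$, $0<v_0\le V^0$. The kinetics $g:[0,\infty)\to\mathbb{R}$ is monotonically decreasing, differentiable, $|g'|\le C$, $-V^0\le g\le -v_0$. Free-interface problem: find $s(t)$, $s(0)=0$, and $u(x,t)$ with $u_t=u_{xx}-\gamma u$ for $x\ne s(t)$, $t>0$; $u(x,0)=u_0(x)$; $g(u(s(t),t))=v(t)$; $u_x^+(s(t),t)-u_x^-(s(t),t)=v(t)$, with $v=s'$, $u_x^\pm$ one-sided derivatives from right/left, $u\to0$ at $\pm\infty$; the classical solution exists and is unique, and $-V^0\le v(t)\le -v_0$. With $G(x,t,\xi,\tau)=[4\pi(t-\tau)]^{-1/2}\exp\{-(x-\xi)^2/(4(t-\tau))\}$, define $(T_2(t)u_0)(x)=e^{-\gamma t}\int_{-\infty}^{\infty}G(x,t,\xi,0)u_0(\xi)d\xi$. Weighted norms: $|f|_\alpha=\sup_x e^{\alpha|x|}|f(x)|$, $C_\alpha=\{f\in C(\mathbb{R}):|f|_\alpha<\infty\}$; for a function $f(\cdot,t)$ at time $t$ associated with the solution (such as $T_2(t)u_0$), $|f(\cdot,t)|_\alpha:=\sup_x e^{\alpha|x-s(t)|}|f(x,t)|$ (weight centred at the interface),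 while $|u_0|_\alpha$ uses the weight centred at $0$. *)

From Stdlib Require Import Reals Lra.
From Coquelicot Require Import Coquelicot.
Open Scope R_scope.

Definition G (x t xi tau : R) : R :=
  / sqrt (4 * PI * (t - tau)) * exp (- (x - xi) ^ 2 / (4 * (t - tau))).

Definition T2 (gamma : R) (u0 : R -> R) (t x : R) : R :=
  exp (- gamma * t) *
  RInt_gen (fun xi => G x t xi 0 * u0 xi) (Rbar_locally m_infty) (Rbar_locally p_infty).

Definition wnorm (alpha c : R) (f : R -> R) : Rbar :=
  Lub_Rbar (fun y => exists x, y = exp (alpha * Rabs (x - c)) * Rabs (f x)).

Definition in_C (alpha : R) (f : R -> R) : Prop :=
  (forall x, continuous f x) /\ is_finite (wnorm alpha 0 f).

Definition kinetics (v0 V0 C : R) (g : R -> R) : Prop :=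
  (forall x y, 0 <= x -> x <= y -> g y <= g x) /\
  (forall x, 0 <= x -> ex_derive g x /\ Rabs (Derive g x) <= C) /\
  (forall x, 0 <= x -> - V0 <= g x <= - v0).

(* Classical solution (s, u) of the free-interface problem;
   u x t is the value at position x, time t;  v = s'. *)
Definition free_interface_solution (gamma : R) (g u0 : R -> R)
    (s : R -> R) (u : R -> R -> R) : Prop :=
  s 0 = 0 /\
  filterlim s (at_right 0) (locally 0) /\
  (forall t, 0 < t -> ex_derive s t) /\
  (forall x t, 0 <= t ->
     filterlim (fun p : R * R => u (fst p) (snd p))
       (within (fun p : R * R => 0 <= snd p) (locally (x, t))) (locally (u x t))) /\
  (forall x, u x 0 = u0 x) /\
  (forall x t, 0 < t -> x <> s t ->
     ex_derive (fun tau => u x tau) t /\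
     ex_derive_n (fun y => u y t) 2 x /\
     Derive (fun tau => u x tau) t = Derive_n (fun y => u y t) 2 x - gamma * u x t) /\
  (forall t, 0 < t -> 0 <= u (s t) t /\ g (u (s t) t) = Derive s t) /\
  (forall t, 0 < t -> exists dp dm : R,
     filterlim (fun h => (u (s t + h) t - u (s t) t) / h) (at_right 0) (locally dp) /\
     filterlim (fun h => (u (s t + h) t - u (s t) t) / h) (at_left 0) (locally dm) /\
     dp - dm = Derive s t) /\
  (forall t, 0 < t ->
     filterlim (fun x => u x t) (Rbar_locally p_infty) (locally 0) /\
     filterlim (fun x => u x t) (Rbar_locally m_infty) (locally 0)).

(* Completing the square in the exponent, the heat kernel times the weight e^{-alpha |xi|}
   is at most e^{alpha^2 t - alpha |x|} times a Gaussian centred at x - 2 alpha t sgn x.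
   Dominating that Gaussian e^{-z^2} by the Cauchy profile 1/(1 + z^2), whose integral is
   computed by arctan, bounds the kernel integral by sqrt(pi) <= 2 times
   e^{alpha^2 t - alpha |x|} |u0|_alpha.  Finally |s'| = |g| <= V0 gives |s(t)| <= V0 t, so
   moving the centre of the weight from 0 to s(t) costs at most e^{alpha V0 t}. *)

From Stdlib Require Import Reals Lra.
From Coquelicot Require Import Coquelicot.
Open Scope R_scope.

Lemma exp_le_mono (a b : R) : a <= b -> exp a <= exp b.
Proof. intros [lt | ->]; [left; apply exp_increasing, lt | right; reflexivity]. Qed.

Lemma exp_neg_sqr_le (z : R) : exp (- z ^ 2) <= / (1 + z ^ 2).
Proof.
  rewrite exp_Ropp. apply Rinv_le_contravar; [nra | apply exp_ineq1_le].
Qed.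

Section DominatedByPrimitive.

Variables (f h H : R -> R).
Hypothesis f_cont : forall x, continuous f x.
Hypothesis f_dom : forall x, Rabs (f x) <= h x.
Hypothesis H_prim : forall x, is_derive H x (h x).
Hypothesis h_cont : forall x, continuous h x.

Lemma ex_RInt_dom (a b : R) : ex_RInt f a b.
Proof. apply (ex_RInt_continuous (V := R_CompleteNormedModule)); auto. Qed.

Lemma abs_RInt_le_primitive (a b : R) : Rabs (RInt f a b) <= Rabs (H b - H a).
Proof.
  assert (ordered : forall p q, p <= q -> Rabs (RInt f p q) <= H q - H p).
  { intros p q pq.
    assert (h_int : is_RInt h p q (H q - H p)).
    { apply (is_RInt_derive (V := R_CompleteNormedModule)); auto. }
    rewrite <- (is_RInt_unique _ _ _ _ h_int).
    eapply Rle_trans; [apply abs_RInt_le; auto; apply ex_RInt_dom |].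
    apply RInt_le; auto.
    - apply (ex_RInt_continuous (V := R_CompleteNormedModule)); intros.
      apply continuous_comp; auto. apply continuous_Rabs.
    - eexists; eauto. }
  destruct (Rle_dec a b) as [ab | ba].
  - eapply Rle_trans; [apply ordered; lra | apply Rle_abs].
  - rewrite <- opp_RInt_swap by apply ex_RInt_dom.
    change (Rabs (- RInt f b a) <= Rabs (H b - H a)).
    rewrite Rabs_Ropp, Rabs_minus_sym.
    eapply Rle_trans; [apply ordered; lra | apply Rle_abs].
Qed.

Variables (Lm Lp : R).
Hypothesis H_m_infty : is_lim H m_infty Lm.
Hypothesis H_p_infty : is_lim H p_infty Lp.

Lemma ex_RInt_gen_dom :
  ex_RInt_gen f (Rbar_locally m_infty) (Rbar_locally p_infty).
Proof.
  (* Cauchy criterion: two truncations differ by two tail integrals, each bounded by the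
     oscillation of H near one of the infinities. *)
  destruct (proj1 (filterlim_locally_cauchy
      (F := filter_prod (Rbar_locally m_infty) (Rbar_locally p_infty))
      (fun ab => RInt f (fst ab) (snd ab)))) as [l Hl].
  - intros eps.
    assert (eps4 : 0 < eps / 4) by (destruct eps; simpl; lra).
    exists (fun ab => Rabs (H (fst ab) - Lm) < eps / 4 /\ Rabs (H (snd ab) - Lp) < eps / 4).
    split.
    + apply Filter_prod with
        (1 := proj1 (filterlim_locally H Lm) H_m_infty (mkposreal _ eps4))
        (2 := proj1 (filterlim_locally H Lp) H_p_infty (mkposreal _ eps4)).
      intros; simpl; auto.
    + intros [a b] [a' b'] [Ha Hb] [Ha' Hb']; simpl in *.
      change (Rabs (RInt f a' b' - RInt f a b) < eps).
      rewrite <- (RInt_Chasles f a' a b'), <- (RInt_Chasles f a b b') by apply ex_RInt_dom.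
      change (Rabs (RInt f a' a + (RInt f a b + RInt f b b') - RInt f a b) < eps).
      replace (RInt f a' a + (RInt f a b + RInt f b b') - RInt f a b)
        with (RInt f a' a + RInt f b b') by ring.
      pose proof (abs_RInt_le_primitive a' a) as left_tail.
      pose proof (abs_RInt_le_primitive b b') as right_tail.
      eapply Rle_lt_trans; [apply Rabs_triang |].
      revert Ha Hb Ha' Hb' left_tail right_tail; unfold Rabs; repeat destruct Rcase_abs; lra.
  - exists l. intros P HP. apply Hl in HP. unfold filtermapi.
    eapply filter_imp; [| exact HP]. simpl. intros ab Pab.
    exists (RInt f (fst ab) (snd ab)). split; auto.
    apply (RInt_correct (V := R_CompleteNormedModule)), ex_RInt_dom.
Qed.

Lemma abs_RInt_gen_le_primitive :
  Rabs (RInt_gen f (Rbar_locally m_infty) (Rbar_locally p_infty)) <= Lp - Lm.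
Proof.
  assert (everywhere : forall P : R * R -> Prop, (forall ab, P ab) ->
      filter_prod (Rbar_locally m_infty) (Rbar_locally p_infty) P).
  { intros P HP. apply Filter_prod with (fun _ => True) (fun _ => True);
      auto; apply filter_true. }
  assert (h_int : is_RInt_gen h (Rbar_locally m_infty) (Rbar_locally p_infty) (Lp - Lm)).
  { apply is_RInt_gen_ext with (f := Derive H).
    - apply everywhere; intros; apply is_derive_unique; auto.
    - apply is_RInt_gen_Derive; auto; apply everywhere; intros.
      + eexists; eauto.
      + apply continuous_ext with h; auto.
        intros; symmetry; apply is_derive_unique; auto. }
  apply (RInt_gen_norm f h _ _); [| | apply RInt_gen_correct, ex_RInt_gen_dom | exact h_int].
  - apply Filter_prod with (fun a => a < 0) (fun b => 0 < b).
    + exists 0; auto.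
    + exists 0; auto.
    + intros; simpl; lra.
  - apply everywhere; intros; apply f_dom.
Qed.

End DominatedByPrimitive.

Lemma is_lim_atan_p_infty : is_lim atan p_infty (PI / 2).
Proof.
  apply is_lim_ext_loc with (fun y => PI / 2 - atan (/ y)).
  { exists 0. intros y hy. rewrite atan_inv by lra. ring. }
  assert (inv_atan : is_lim (fun y => atan (/ y)) p_infty 0).
  { rewrite <- atan_0.
    eapply filterlim_comp; [| apply continuous_atan].
    apply (is_lim_inv (fun y => y) p_infty p_infty); [apply is_lim_id | discriminate]. }
  eapply is_lim_minus; [apply is_lim_const | exact inv_atan |].
  unfold is_Rbar_minus, is_Rbar_plus; simpl. do 2 f_equal; ring.
Qed.

Lemma is_lim_atan_m_infty : is_lim atan m_infty (- (PI / 2)).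
Proof.
  apply is_lim_ext with (fun y => - atan (- y)).
  { intros y. rewrite atan_opp. ring. }
  apply (is_lim_opp _ _ (PI / 2)).
  apply (is_lim_comp atan (fun y => - y) m_infty (PI / 2) p_infty).
  - apply is_lim_atan_p_infty.
  - apply (is_lim_opp (fun y => y) m_infty m_infty), is_lim_id.
  - exists 0. discriminate.
Qed.

Lemma abs_RInt_gen_le_Cauchy (f : R -> R) (B c k : R) :
  0 < k -> (forall y, continuous f y) ->
  (forall y, Rabs (f y) <= B / (1 + ((y - c) / k) ^ 2)) ->
  Rabs (RInt_gen f (Rbar_locally m_infty) (Rbar_locally p_infty)) <= B * k * PI.
Proof.
  intros k_pos f_cont f_dom.
  set (H := fun y => B * k * atan ((y - c) / k)).
  assert (rescale : forall l L, (l = p_infty \/ l = m_infty) -> is_lim atan l L ->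
      is_lim H l (Rbar_mult (B * k) L)).
  { intros l L l_infinite atan_lim. apply is_lim_scal_l.
    apply (is_lim_comp atan (fun y => (y - c) / k) l L l); auto.
    - destruct l_infinite; subst l; intros P [M HM].
      + exists (c + M * k). intros y hy. apply HM, Rlt_div_r; lra.
      + exists (c + M * k). intros y hy. apply HM, Rlt_div_l; lra.
    - destruct l_infinite; subst l; exists 0; discriminate. }
  eapply Rle_trans.
  - apply (abs_RInt_gen_le_primitive f (fun y => B / (1 + ((y - c) / k) ^ 2)) H)
      with (Lm := - (B * k * (PI / 2))) (Lp := B * k * (PI / 2)); auto.
    + intros y. unfold H. auto_derive; [lra |].
      field. split; [lra | pose proof (pow2_ge_0 (y - c)); nra].
    + intros y. apply (ex_derive_continuous (K := R_AbsRing) (V := R_NormedModule)).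
      auto_derive. pose proof (pow2_ge_0 ((y - c) / k)); simpl in *; lra.
    + replace (- (B * k * (PI / 2))) with (B * k * (- (PI / 2))) by ring.
      exact (rescale _ _ (or_intror eq_refl) is_lim_atan_m_infty).
    + exact (rescale _ _ (or_introl eq_refl) is_lim_atan_p_infty).
  - lra.
Qed.

Lemma completing_square (x xi t alpha sg : R) :
  0 < t -> 0 <= alpha -> sg * sg = 1 -> sg * x = Rabs x ->
  - (x - xi) ^ 2 / (4 * t) - alpha * Rabs xi
    <= alpha ^ 2 * t - alpha * Rabs x - (xi - (x - 2 * sg * alpha * t)) ^ 2 / (4 * t).
Proof.
  intros t_pos alpha_nonneg sg_unit sg_x.
  assert (sg_xi : alpha * (sg * xi) <= alpha * Rabs xi).
  { apply Rmult_le_compat_l; auto.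
    destruct (Rmult_integral (sg - 1) (sg + 1)) as [sg1 | sg1]; [nra | |].
    - replace sg with 1 by lra. rewrite Rmult_1_l. apply Rle_abs.
    - replace (sg * xi) with (- xi) by (replace sg with (-1) by lra; ring).
      rewrite <- (Rabs_Ropp xi). apply Rle_abs. }
  replace ((xi - (x - 2 * sg * alpha * t)) ^ 2 / (4 * t))
    with ((x - xi) ^ 2 / (4 * t) - alpha * (sg * x) + alpha * (sg * xi) + (sg * sg) * alpha ^ 2 * t)
    by (field; lra).
  rewrite sg_unit, sg_x. lra.
Qed.

Lemma heat_kernel_weight_le (x xi t alpha sg : R) :
  0 < t -> 0 <= alpha -> sg * sg = 1 -> sg * x = Rabs x ->
  G x t xi 0 * exp (- (alpha * Rabs xi))
    <= exp (alpha ^ 2 * t - alpha * Rabs x) / sqrt (4 * PI * t)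
       / (1 + ((xi - (x - 2 * sg * alpha * t)) / sqrt (4 * t)) ^ 2).
Proof.
  intros t_pos alpha_nonneg sg_unit sg_x.
  set (k := sqrt (4 * t)).
  set (z := (xi - (x - 2 * sg * alpha * t)) / k).
  assert (z_sq : z ^ 2 = (xi - (x - 2 * sg * alpha * t)) ^ 2 / (4 * t)).
  { assert (k_pos : 0 < k) by (apply sqrt_lt_R0; lra).
    unfold z. rewrite <- (pow2_sqrt (4 * t)) by lra. fold k. field. lra. }
  assert (exponent_le : exp (- (x - xi) ^ 2 / (4 * t)) * exp (- (alpha * Rabs xi))
                        <= exp (alpha ^ 2 * t - alpha * Rabs x) * / (1 + z ^ 2)).
  { rewrite <- exp_plus.
    apply Rle_trans with (exp (alpha ^ 2 * t - alpha * Rabs x - z ^ 2)).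
    - apply exp_le_mono. rewrite z_sq.
      pose proof (completing_square x xi t alpha sg); lra.
    - replace (alpha ^ 2 * t - alpha * Rabs x - z ^ 2)
        with (alpha ^ 2 * t - alpha * Rabs x + - z ^ 2) by ring.
      rewrite exp_plus.
      apply Rmult_le_compat_l; [left; apply exp_pos | apply exp_neg_sqr_le]. }
  unfold G. rewrite Rminus_0_r, Rmult_assoc.
  apply Rle_trans
    with (/ sqrt (4 * PI * t) * (exp (alpha ^ 2 * t - alpha * Rabs x) * / (1 + z ^ 2))).
  - apply Rmult_le_compat_l; [| exact exponent_le].
    left; apply Rinv_0_lt_compat, sqrt_lt_R0; pose proof PI_RGT_0; nra.
  - right; unfold Rdiv; ring.
Qed.

Lemma abs_heat_integral_le (u0 : R -> R) (x t alpha M : R) :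
  0 < t -> 0 <= alpha -> (forall xi, continuous u0 xi) ->
  (forall xi, exp (alpha * Rabs xi) * Rabs (u0 xi) <= M) ->
  Rabs (RInt_gen (fun xi => G x t xi 0 * u0 xi) (Rbar_locally m_infty) (Rbar_locally p_infty))
    <= sqrt PI * M * exp (alpha ^ 2 * t - alpha * Rabs x).
Proof.
  intros t_pos alpha_nonneg u0_cont u0_le.
  set (sg := if Rle_dec 0 x then 1 else -1).
  assert (sg_unit : sg * sg = 1) by (unfold sg; destruct Rle_dec; lra).
  assert (sg_x : sg * x = Rabs x).
  { unfold sg; destruct Rle_dec; [rewrite Rabs_right | rewrite Rabs_left]; lra. }
  assert (M_nonneg : 0 <= M).
  { eapply Rle_trans; [| apply (u0_le 0)].
    apply Rmult_le_pos; [left; apply exp_pos | apply Rabs_pos]. }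
  set (E := exp (alpha ^ 2 * t - alpha * Rabs x)).
  assert (sqrt_PI_pos : 0 < sqrt PI) by apply sqrt_lt_R0, PI_RGT_0.
  assert (k_pos : 0 < sqrt (4 * t)) by (apply sqrt_lt_R0; lra).
  assert (kernel_scale : sqrt (4 * PI * t) = sqrt PI * sqrt (4 * t)).
  { rewrite <- sqrt_mult by (pose proof PI_RGT_0; lra). f_equal; ring. }
  (* the Cauchy bound B k PI with B = M E / sqrt (4 PI t) and k = sqrt (4 t) *)
  replace (sqrt PI * M * E) with (M * E / sqrt (4 * PI * t) * sqrt (4 * t) * PI).
  2: { assert (PI_sq : sqrt PI * sqrt PI = PI) by (apply sqrt_sqrt; pose proof PI_RGT_0; lra).
       rewrite kernel_scale. set (sP := sqrt PI) in *. rewrite <- PI_sq.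
       field; lra. }
  apply abs_RInt_gen_le_Cauchy with (c := x - 2 * sg * alpha * t); [exact k_pos | |].
  - intros xi. apply (continuous_mult (fun xi => G x t xi 0) u0); [| apply u0_cont].
    unfold G. apply (ex_derive_continuous (K := R_AbsRing) (V := R_NormedModule)).
    auto_derive. lra.
  - intros xi.
    assert (G_pos : 0 < G x t xi 0).
    { unfold G. rewrite Rminus_0_r. apply Rmult_lt_0_compat; [| apply exp_pos].
      apply Rinv_0_lt_compat, sqrt_lt_R0. pose proof PI_RGT_0; nra. }
    assert (u0_decay : Rabs (u0 xi) <= M * exp (- (alpha * Rabs xi))).
    { rewrite exp_Ropp. apply (Rmult_le_reg_l (exp (alpha * Rabs xi))); [apply exp_pos |].
      pose proof (u0_le xi). pose proof (exp_pos (alpha * Rabs xi)).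
      replace (exp (alpha * Rabs xi) * (M * / exp (alpha * Rabs xi))) with M by (field; lra).
      lra. }
    pose proof (heat_kernel_weight_le x xi t alpha sg t_pos alpha_nonneg sg_unit sg_x) as kernel_le.
    rewrite Rabs_mult, (Rabs_right (G x t xi 0)) by lra.
    apply Rle_trans with (M * (G x t xi 0 * exp (- (alpha * Rabs xi)))).
    + replace (M * (G x t xi 0 * exp (- (alpha * Rabs xi))))
        with (G x t xi 0 * (M * exp (- (alpha * Rabs xi)))) by ring.
      apply Rmult_le_compat_l; lra.
    + unfold Rdiv in *. rewrite (Rmult_assoc M E), (Rmult_assoc M).
      apply Rmult_le_compat_l; [exact M_nonneg | exact kernel_le].
Qed.

Lemma Rabs_sub_le_of_derive_bound (f : R -> R) (f0 V t : R) :
  0 < t -> filterlim f (at_right 0) (locally f0) ->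
  (forall e, 0 < e <= t -> ex_derive f e /\ Rabs (Derive f e) <= V) ->
  Rabs (f t - f0) <= V * t.
Proof.
  intros t_pos f_lim f_der.
  assert (lipschitz : forall e, 0 < e < t -> Rabs (f t - f e) <= V * (t - e)).
  { intros e he.
    destruct (MVT_gen f e t (Derive f)) as [d [hd ->]];
      rewrite Rmin_left, Rmax_right in * by lra.
    - intros y hy. apply Derive_correct, f_der. lra.
    - intros y hy. apply continuity_pt_filterlim.
      apply (ex_derive_continuous (K := R_AbsRing) (V := R_NormedModule)), f_der. lra.
    - rewrite Rabs_mult, (Rabs_right (t - e)) by lra.
      apply Rmult_le_compat_r; [lra | apply f_der; lra]. }
  change (Rbar_le (Rabs (f t - f0)) (V * t)).
  apply (filterlim_le (F := at_right 0) (fun e => Rabs (f t - f e)) (fun e => V * (t - e))).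
  - exists (mkposreal t t_pos). intros e he e_pos. apply lipschitz.
    change (Rabs (e - 0) < t) in he. rewrite Rminus_0_r, Rabs_right in he; lra.
  - apply (filterlim_comp _ _ _ f (fun y => Rabs (f t - y)) _ _ _ f_lim).
    apply (continuous_comp (fun y => f t - y) Rabs); [| apply continuous_Rabs].
    apply (ex_derive_continuous (K := R_AbsRing) (V := R_NormedModule)). auto_derive. auto.
  - replace (V * t) with (V * (t - 0)) by ring.
    eapply filterlim_filter_le_1; [apply filter_le_within |].
    apply (ex_derive_continuous (K := R_AbsRing) (V := R_NormedModule)
             (fun e => V * (t - e))). auto_derive. auto.
Qed.

Lemma interface_displacement_le (gamma v0 V0 C : R) (g u0 s : R -> R) (u : R -> R -> R) (t : R) :
  0 < v0 -> kinetics v0 V0 C g -> free_interface_solution gamma g u0 s u -> 0 < t ->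
  Rabs (s t) <= V0 * t.
Proof.
  intros v0_pos [_ [_ g_range]] [s0 [s_lim [s_der [_ [_ [_ [s_speed _]]]]]]] t_pos.
  rewrite <- (Rminus_0_r (s t)), <- s0 at 1.
  apply Rabs_sub_le_of_derive_bound; auto.
  { now rewrite s0. }
  intros e he. split; [apply s_der; lra |].
  destruct (s_speed e) as [u_nonneg <-]; [lra |].
  destruct (g_range _ u_nonneg).
  rewrite Rabs_left1; lra.
Qed.

Lemma wnorm_le (alpha c B : R) (f : R -> R) :
  (forall x, exp (alpha * Rabs (x - c)) * Rabs (f x) <= B) -> Rbar_le (wnorm alpha c f) B.
Proof.
  intros f_le. unfold wnorm.
  destruct (Lub_Rbar_correct (fun y => exists x, y = exp (alpha * Rabs (x - c)) * Rabs (f x)))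
    as [_ least].
  apply least. intros y [x ->]. apply f_le.
Qed.

Lemma le_real_wnorm (alpha c x : R) (f : R -> R) :
  is_finite (wnorm alpha c f) -> exp (alpha * Rabs (x - c)) * Rabs (f x) <= real (wnorm alpha c f).
Proof.
  intros finite.
  destruct (Lub_Rbar_correct (fun y => exists x, y = exp (alpha * Rabs (x - c)) * Rabs (f x)))
    as [upper _].
  assert (le_wnorm : Rbar_le (exp (alpha * Rabs (x - c)) * Rabs (f x)) (wnorm alpha c f))
    by (apply upper; exists x; reflexivity).
  rewrite <- finite in le_wnorm. exact le_wnorm.
Qed.

Lemma weighted_T2_le (gamma alpha V M t c x : R) (u0 : R -> R) :
  0 < t -> 0 <= alpha -> Rabs c <= V * t -> (forall xi, continuous u0 xi) ->
  (forall xi, exp (alpha * Rabs xi) * Rabs (u0 xi) <= M) ->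
  exp (alpha * Rabs (x - c)) * Rabs (T2 gamma u0 t x)
    <= 2 * exp ((- gamma + alpha ^ 2 + alpha * V) * t) * M.
Proof.
  intros t_pos alpha_nonneg c_le u0_cont u0_le.
  pose proof (abs_heat_integral_le u0 x t alpha M t_pos alpha_nonneg u0_cont u0_le) as I_le.
  set (I := RInt_gen _ _ _) in *.
  assert (M_nonneg : 0 <= M).
  { eapply Rle_trans; [| apply (u0_le 0)].
    apply Rmult_le_pos; [left; apply exp_pos | apply Rabs_pos]. }
  assert (weight_le : exp (alpha * Rabs (x - c)) <= exp (alpha * Rabs x + alpha * V * t)).
  { apply exp_le_mono.
    replace (alpha * Rabs x + alpha * V * t) with (alpha * (Rabs x + V * t)) by ring.
    apply Rmult_le_compat_l; [exact alpha_nonneg |].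
    pose proof (Rabs_triang x (- c)) as triangle. rewrite Rabs_Ropp in triangle.
    unfold Rminus. lra. }
  assert (sqrt_PI_le : sqrt PI <= 2).
  { rewrite <- (sqrt_square 2) by lra.
    apply sqrt_le_1_alt. pose proof PI_4. lra. }
  assert (exp_split : exp ((- gamma + alpha ^ 2 + alpha * V) * t)
      = exp (alpha * Rabs x + alpha * V * t)
        * (exp (- gamma * t) * exp (alpha ^ 2 * t - alpha * Rabs x))).
  { rewrite <- !exp_plus. f_equal. ring. }
  unfold T2. fold I. rewrite Rabs_mult, (Rabs_right (exp _)) by (left; apply exp_pos).
  apply Rle_trans with (exp (alpha * Rabs x + alpha * V * t)
    * (exp (- gamma * t) * (sqrt PI * M * exp (alpha ^ 2 * t - alpha * Rabs x)))).
  - apply Rmult_le_compat; try (left; apply exp_pos); auto.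
    + apply Rmult_le_pos; [left; apply exp_pos | apply Rabs_pos].
    + apply Rmult_le_compat_l; [left; apply exp_pos | exact I_le].
  - rewrite exp_split.
    set (P := exp (alpha * Rabs x + alpha * V * t)
              * (exp (- gamma * t) * exp (alpha ^ 2 * t - alpha * Rabs x))).
    assert (P_pos : 0 < P) by (unfold P; repeat apply Rmult_lt_0_compat; apply exp_pos).
    replace (exp (alpha * Rabs x + alpha * V * t)
             * (exp (- gamma * t) * (sqrt PI * M * exp (alpha ^ 2 * t - alpha * Rabs x))))
      with (sqrt PI * (P * M)) by (unfold P; ring).
    rewrite Rmult_assoc.
    apply Rmult_le_compat_r; [apply Rmult_le_pos; lra | exact sqrt_PI_le].
Qed.

(* The smallness condition on alpha only makes the bound decay in time; the estimate itself
   holds for every alpha >= 0 and needs only -V0 <= g <= -v0 < 0 from the kinetics. *)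
Theorem mainTheorem3 (gamma v0 V0 C : R) (g : R -> R) (alpha : R)
    (u0 : R -> R) (s : R -> R) (u : R -> R -> R) :
  0 < gamma -> 0 < v0 -> v0 <= V0 ->
  kinetics v0 V0 C g ->
  0 <= alpha -> alpha ^ 2 + alpha * V0 - gamma < 0 ->
  in_C alpha u0 ->
  free_interface_solution gamma g u0 s u ->
  forall t, 0 < t ->
    Rbar_le (wnorm alpha (s t) (T2 gamma u0 t))
      (Finite (2 * exp ((- gamma + alpha ^ 2 + alpha * V0) * t)
                 * real (wnorm alpha 0 u0))).
Proof.
  intros _ v0_pos _ kin alpha_nonneg _ [u0_cont u0_finite] sol t t_pos.
  apply wnorm_le. intros x.
  apply weighted_T2_le; auto.
  - exact (interface_displacement_le gamma v0 V0 C g u0 s u t v0_pos kin sol t_pos).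
  - intros xi. rewrite <- (Rminus_0_r xi) at 1. apply le_real_wnorm, u0_finite.
Qed.
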